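(* For every integer $d\ge3$, the set $\mathfrak P_d\subseteq\mathbb R^{2d-3}$ is an integral polytope (all its vertices lie in $\mathbb Z^{2d-3}$) with exactly $3^{d-2}$ vertices.
   Context: $\mathfrak P_d\subseteq\mathbb R^{2d-3}$ is the set of all $(x_1,\dots,x_{d-2},y_1,\dots,y_{d-2},z)\in\mathbb R^{2d-3}$ satisfying: $x_j-x_{j+1}\ge0$ and $y_j-y_{j+1}\ge0$ for $j\in\{1,\dots,d-3\}$; $x_j\ge0$, $y_j\ge0$ for $j\in\{1,\dots,d-2\}$; $j(z+d-1-j)+\sum_{i=0}^{j-2}x_{d-2-i}-\sum_{i=1}^{j}y_i\ge0$ for $j\in\{1,\dots,d-2\}$; and $\sum_{i=1}^{d-2}y_i-\sum_{i=1}^{d-2}x_i=z(d-1)$. A vertex of a polytope given by a system of linear inequalities is a point of it at which $2d-3$ linearly independent constraints are tight. *)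

(* Points of R^(2d-3) are row vectors 'rV[R]_(2d-3) over an
   arbitrary real field R (the statement specialises to the reals). *)
From HB Require Import structures.
From mathcomp Require Import all_boot all_order all_algebra.
Set Implicit Arguments. Unset Strict Implicit. Unset Printing Implicit Defensive.
Import Order.TTheory GRing.Theory Num.Theory.
Local Open Scope ring_scope.

Definition Pdim (d : nat) : nat := (2 * d - 3)%N.

Definition ecoord (R : realFieldType) (n i : nat) : 'rV[R]_n :=
  \row_(j < n) ((nat_of_ord j == i)%:R).

(* coordinate layout: (x_1..x_{d-2}, y_1..y_{d-2}, z), 1-based j for x_j, y_j *)
Definition ex (R : realFieldType) (d j : nat) : 'rV[R]_(Pdim d) :=
  ecoord R (Pdim d) (j - 1)%N.
Definition ey (R : realFieldType) (d j : nat) : 'rV[R]_(Pdim d) :=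
  ecoord R (Pdim d) (d - 2 + (j - 1))%N.
Definition ez (R : realFieldType) (d : nat) : 'rV[R]_(Pdim d) :=
  ecoord R (Pdim d) (2 * d - 4)%N.

(* A constraint is a pair (a, b) standing for the affine form  v |-> a.v + b. *)
Definition cval (R : realFieldType) (n : nat) (c : 'rV[R]_n * R) (v : 'rV[R]_n) : R :=
  \sum_(j < n) c.1 0 j * v 0 j + c.2.

(* The inequality constraints of P_d, each of the form  a.v + b >= 0 *)
Definition Pd_ineqs (R : realFieldType) (d : nat) : seq ('rV[R]_(Pdim d) * R) :=
  [seq (ex R d j - ex R d j.+1, 0) | j <- iota 1 (d - 3)]
  ++ [seq (ey R d j - ey R d j.+1, 0) | j <- iota 1 (d - 3)]
  ++ [seq (ex R d j, 0) | j <- iota 1 (d - 2)]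
  ++ [seq (ey R d j, 0) | j <- iota 1 (d - 2)]
  ++ [seq (j%:R *: ez R d
             + \sum_(0 <= i < j - 1) ex R d (d - 2 - i)
             - \sum_(1 <= i < j.+1) ey R d i,
           (j * (d - 1 - j))%:R) | j <- iota 1 (d - 2)].

Definition Pd_eq (R : realFieldType) (d : nat) : 'rV[R]_(Pdim d) * R :=
  (\sum_(1 <= i < d - 1) ey R d i - \sum_(1 <= i < d - 1) ex R d i
     - (d - 1)%:R *: ez R d, 0).

Definition in_Pd (R : realFieldType) (d : nat) (v : 'rV[R]_(Pdim d)) : Prop :=
  (forall c, c \in Pd_ineqs R d -> 0 <= cval c v) /\ cval (Pd_eq R d) v = 0.

Definition Pd_cons (R : realFieldType) (d : nat) : seq ('rV[R]_(Pdim d) * R) :=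
  Pd_ineqs R d ++ [:: Pd_eq R d].

(* v is a vertex: v in P_d and there are 2d-3 constraints of the system, tight at
   v, whose (linear parts) are linearly independent.  The constraints are chosen
   by a list I of 2d-3 indices into Pd_cons; linear independence = the matrix
   whose rows are their normal vectors is row_free. *)
Definition is_vertex_Pd (R : realFieldType) (d : nat) (v : 'rV[R]_(Pdim d)) : Prop :=
  in_Pd v /\
  exists I : seq nat,
    [/\ size I = Pdim d,
        (forall i, i \in I -> (i < size (Pd_cons R d))%N /\
                              cval (nth (0, 0) (Pd_cons R d) i) v = 0) &
        row_free (\matrix_(k < Pdim d, j < Pdim d)
                    (nth (0, 0) (Pd_cons R d) (nth 0%N I k)).1 0 j)].

From HB Require Import structures.
From mathcomp Require Import all_boot all_order all_algebra.
From mathcomp Require Import zify ring lra.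
Set Implicit Arguments.
Unset Strict Implicit.
Unset Printing Implicit Defensive.
Import Order.TTheory GRing.Theory Num.Theory.
Local Open Scope ring_scope.

(* Write S_j for the left-hand side of the j-th inequality of the third family, so that
   S_0 = 0 and S_(d-1) = 0 is the equation, and set a_j = x_(d-1-j) - x_(d-j) and
   b_j = y_j - y_(j+1) (with x_(d-1) = y_(d-1) = 0).  Then S has second difference
   a_j + b_j - 2, the remaining inequalities x_j, y_j >= 0 follow, and (a, b, S_(d-1))
   determine the point; hence P_d = {a, b, S >= 0, S_(d-1) = 0} and the linear map to
   these slack coordinates is injective.
   A point of a polyhedron is a vertex iff it is extreme, and an extreme point of P_d has,
   at every j, at most one of S_j, a_j, b_j nonzero: otherwise one can move along
   b_j - a_j, or along the discrete Green's function of the run of positive S around j.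
   Conversely each of the 3^(d-2) choices of the surviving slack at every j is realised by
   exactly one point, whose S is the parabola (j - P)(Q - j) on the runs between its zeros
   P < Q; all its slacks, hence all its coordinates, are integers.  Boundedness follows
   from sum_j (a_j + b_j) = 2(d-2) - S_1 - S_(d-2). *)

(** * Vertices and extreme points of polyhedra *)

Section Polyhedron.
Variables (R : realFieldType) (m : nat).
Implicit Types (u v w e : 'rV[R]_m) (P : 'rV[R]_m -> Prop).

Definition dotr u v : R := \sum_(j < m) u 0 j * v 0 j.

Lemma cvalE (c : 'rV[R]_m * R) v : cval c v = dotr c.1 v + c.2.
Proof. by []. Qed.

Lemma dotrDr u v w : dotr u (v + w) = dotr u v + dotr u w.
Proof. by rewrite /dotr -big_split; apply: eq_bigr => j _; rewrite mxE mulrDr. Qed.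

Lemma dotrZr u t v : dotr u (t *: v) = t * dotr u v.
Proof. by rewrite /dotr mulr_sumr; apply: eq_bigr => j _; rewrite mxE mulrCA. Qed.

Lemma dotrBr u v w : dotr u (v - w) = dotr u v - dotr u w.
Proof. by rewrite /dotr -sumrB; apply: eq_bigr => j _; rewrite !mxE mulrBr. Qed.

Lemma dotrBl u w v : dotr (u - w) v = dotr u v - dotr w v.
Proof. by rewrite /dotr -sumrB; apply: eq_bigr => j _; rewrite !mxE mulrBl. Qed.

Lemma dotrDl u w v : dotr (u + w) v = dotr u v + dotr w v.
Proof. by rewrite /dotr -big_split; apply: eq_bigr => j _; rewrite mxE mulrDl. Qed.

Lemma dotrZl t u v : dotr (t *: u) v = t * dotr u v.
Proof. by rewrite /dotr mulr_sumr; apply: eq_bigr => j _; rewrite mxE mulrA. Qed.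

Lemma dotr_suml (I : Type) (r : seq I) (Q : pred I) (F : I -> 'rV[R]_m) v :
  dotr (\sum_(i <- r | Q i) F i) v = \sum_(i <- r | Q i) dotr (F i) v.
Proof.
apply: (big_morph (dotr^~ v)) => [u w|]; first exact: dotrDl.
by rewrite /dotr big1 // => j _; rewrite mxE mul0r.
Qed.

Lemma dotr_ecoord i v (i_lt : (i < m)%N) : dotr (ecoord R m i) v = v 0 (Ordinal i_lt).
Proof.
rewrite /dotr (bigD1 (Ordinal i_lt)) //= big1 => [|j ji]; rewrite !mxE ?eqxx ?mul1r ?addr0 //.
by rewrite -[j == _ :> nat]/(j == Ordinal i_lt) (negbTE ji) mul0r.
Qed.

Definition linear_form (f : 'rV[R]_m -> R) := forall v e t, f (v + t *: e) = f v + t * f e.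

Lemma dotr_linear u : linear_form (dotr u).
Proof. by move=> v e t; rewrite dotrDr dotrZr. Qed.

Lemma linear_form0 f : linear_form f -> f 0 = 0.
Proof. by move=> f_lin; have := f_lin 0 0 1; rewrite scaler0 addr0 mul1r; lra. Qed.

Definition extreme P v := P v /\ forall p q, P p -> P q -> p + q = v + v -> p = v.

Lemma extreme_segment_eq0 P v e t :
  extreme P v -> t != 0 -> P (v + t *: e) -> P (v - t *: e) -> e = 0.
Proof.
move=> [_ v_ext] t_neq0 Pp Pq.
have /eqP : v + t *: e = v by apply: (v_ext _ (v - t *: e)); rewrite // addrACA subrr addr0.
by rewrite -subr_eq0 addrAC subrr add0r scaler_eq0 (negbTE t_neq0) => /eqP.
Qed.

Lemma small_perturbation (I : eqType) (s : seq I) (f g : I -> R) :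
  (forall i, i \in s -> 0 <= f i /\ (f i = 0 -> g i = 0)) ->
  exists2 t, 0 < t & forall i, i \in s -> 0 <= f i + t * g i /\ 0 <= f i - t * g i.
Proof.
move=> hs; suff [t t_gt0 ht] : exists2 t, 0 < t & forall i, i \in s -> t * `|g i| <= f i.
  exists t => // i /ht; rewrite -[t in t * `|_|]gtr0_norm // -normrM ler_norml.
  by case/andP; split; lra.
elim: s hs => [|i0 s IH] hs; first by exists 1 => // i; rewrite in_nil.
have [t t_gt0 ht] := IH (fun i si => hs i (mem_behead (s := i0 :: s) si)).
have [f_ge0 fg0] := hs _ (mem_head _ _).
have [f0|f_neq0] := eqVneq (f i0) 0.
  by exists t => // i /predU1P[->|/ht //]; rewrite fg0 // normr0 mulr0 f0.
have f_gt0 : 0 < f i0 by rewrite lt_def f_neq0.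
have g1_gt0 : 0 < `|g i0| + 1 by rewrite ltr_wpDl.
pose t' := Order.min t (f i0 / (`|g i0| + 1)).
have t'_gt0 : 0 < t' by rewrite lt_min t_gt0 divr_gt0.
exists t' => // i /predU1P[->|/ht fi].
  have : t' <= f i0 / (`|g i0| + 1) by rewrite ge_min lexx orbT.
  rewrite ler_pdivlMr //; nra.
by apply: le_trans fi; rewrite ler_wpM2r // ge_min lexx.
Qed.

Section Vertices.
Variables (ineqs eqs : seq ('rV[R]_m * R)) (P : 'rV[R]_m -> Prop).
Hypothesis P_feasible : forall w,
  P w <-> (forall c, c \in ineqs -> 0 <= cval c w) /\ (forall c, c \in eqs -> cval c w = 0).

(* For ineqs := Pd_ineqs, eqs := [:: Pd_eq] and P := in_Pd this unfolds to is_vertex_Pd. *)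
Definition vertex v := P v /\ exists I : seq nat,
  [/\ size I = m,
      (forall i, i \in I -> (i < size (ineqs ++ eqs))%N /\
                             cval (nth (0, 0) (ineqs ++ eqs) i) v = 0) &
      row_free (\matrix_(k < m, j < m) (nth (0, 0) (ineqs ++ eqs) (nth 0%N I k)).1 0 j)].

Lemma vertex_extreme v : vertex v -> extreme P v.
Proof.
case=> Pv [I [sizeI I_tight I_free]]; split=> // p q Pp Pq pqv.
have [[pi pe] [qi qe]] := (proj1 (P_feasible p) Pp, proj1 (P_feasible q) Pq).
have tight_dir (k : 'I_m) : dotr (nth (0, 0) (ineqs ++ eqs) (nth 0%N I k)).1 (p - v) = 0.
  set c := nth _ _ _.
  have kI : (k < size I)%N by rewrite sizeI.
  have [I_lt] := I_tight _ (mem_nth 0%N kI); rewrite -/c cvalE dotrBr => cv0.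
  have := congr1 (dotr c.1) pqv; rewrite !dotrDr.
  have := mem_nth (0, 0) I_lt; rewrite -/c mem_cat => /orP[ci|ce].
    by move: (pi _ ci) (qi _ ci); rewrite !cvalE; lra.
  by move: (pe _ ce) (qe _ ce); rewrite !cvalE; lra.
set M := \matrix_(k, j) _ in I_free.
have Mpv : M *m (p - v)^T = 0.
  apply/matrixP => k i; rewrite !mxE -[RHS](tight_dir k).
  by apply: eq_bigr => j _; rewrite !mxE (ord1 i).
have /(congr1 trmx) : (p - v)^T = 0.
  have M_unit : M \in unitmx by rewrite -row_free_unit.
  by rewrite -(mulKmx M_unit (p - v)^T) Mpv mulmx0.
by rewrite trmxK trmx0 => /eqP; rewrite subr_eq0 => /eqP.
Qed.

Lemma extreme_tight_dir v e : extreme P v ->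
  (forall c, c \in ineqs ++ eqs -> cval c v = 0 -> dotr c.1 e = 0) -> e = 0.
Proof.
move=> v_ext tight_e; have [/P_feasible[vi ve] _] := v_ext.
have /small_perturbation[t t_gt0 ht] :
    forall c, c \in ineqs -> 0 <= cval c v /\ (cval c v = 0 -> dotr c.1 e = 0).
  by move=> c ci; split; [apply: vi | apply: tight_e; rewrite mem_cat ci].
have e_eq c : c \in eqs -> dotr c.1 e = 0.
  by move=> ce; apply: tight_e; rewrite ?mem_cat ?ce ?orbT ?ve.
apply: (extreme_segment_eq0 v_ext (lt0r_neq0 t_gt0)); apply/P_feasible.
  split=> c c_in; rewrite cvalE dotrDr dotrZr.
    by have [+ _] := ht _ c_in; rewrite cvalE addrAC.
  by rewrite e_eq // mulr0 addr0 -cvalE ve.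
split=> c c_in; rewrite cvalE dotrBr dotrZr.
  by have [_ +] := ht _ c_in; rewrite cvalE addrAC.
by rewrite e_eq // mulr0 subr0 -cvalE ve.
Qed.

Lemma extreme_vertex v : extreme P v -> vertex v.
Proof.
move=> v_ext; split; first by case: v_ext.
set cs := ineqs ++ eqs.
pose tight := [seq i <- iota 0 (size cs) | cval (nth (0, 0) cs i) v == 0].
pose A := \matrix_(k < size tight, j < m) (nth (0, 0) cs (nth 0%N tight k)).1 0 j.
have tight_row c : c \in cs -> cval c v = 0 ->
    exists k : 'I_(size tight), nth (0, 0) cs (nth 0%N tight k) = c.
  move=> c_in cv0; have i_in : index c cs \in tight.
    by rewrite mem_filter nth_index // cv0 eqxx mem_iota index_mem c_in.
  by exists (Ordinal (etrans (index_mem _ _) i_in)); rewrite /= !nth_index.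
have A_full : row_full A.
  rewrite -cokermx_eq0; apply/eqP/matrixP => i j0.
  suff /rowP/(_ i) : \row_i' cokermx A i' j0 = 0 by rewrite !mxE.
  apply: (extreme_tight_dir v_ext) => c c_in cv0; have [k <-] := tight_row c c_in cv0.
  transitivity ((A *m cokermx A) k j0); last by rewrite mulmx_coker mxE.
  by rewrite mxE /dotr; apply: eq_bigr => j _; rewrite !mxE.
pose f := fullrankfun A_full.
exists [seq nth 0%N tight (f k) | k <- enum 'I_m]; split.
- by rewrite size_map size_enum_ord.
- move=> _ /mapP[k _ ->]; have := mem_nth 0%N (ltn_ord (f k)).
  by rewrite mem_filter mem_iota => /andP[/eqP-> /andP[_ ->]].
- suff -> : \matrix_(k < m, j < m)
      (nth (0, 0) cs (nth 0%N [seq nth 0%N tight (f k) | k <- enum 'I_m] k)).1 0 j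
      = rowsub f A by exact: fullrowsub_free.
  apply/matrixP => k j; rewrite !mxE (nth_map k) ?size_enum_ord //.
  by rewrite nth_ord_enum.
Qed.

Lemma vertexP v : vertex v <-> extreme P v.
Proof. by split; [apply: vertex_extreme | apply: extreme_vertex]. Qed.

End Vertices.
End Polyhedron.


(** * Discrete second differences *)

Section SecondDifference.
Variable R : realDomainType.
Implicit Types f g h : nat -> R.

Definition d2 f k := f k.+1 - 2 * f k + f k.-1.

Lemma d2_unique m f g : f 0%N = g 0%N -> f m = g m ->
  (forall k, (0 < k < m)%N -> f k = g k \/ d2 f k = d2 g k) ->
  forall k, (k <= m)%N -> f k = g k.
Proof.
move=> fg0 fgm fg_k; pose h k := f k - g k.
have h_eq0 k : h k = 0 -> f k = g k by move/eqP; rewrite subr_eq0 => /eqP.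
have h0 : h 0%N = 0 by rewrite /h fg0 subrr.
have hm : h m = 0 by rewrite /h fgm subrr.
have h_k k : (0 < k < m)%N -> h k = 0 \/ d2 h k = 0.
  move=> /fg_k[fgk|d2fg]; [left | right]; rewrite /h /d2 ?fgk ?subrr //.
  by move: d2fg; rewrite /d2; lra.
suff h_pre k : (k <= m)%N -> forall i, (i <= k)%N -> h i = 0.
  by move=> k km; apply/h_eq0/(h_pre k km).
elim: k => [_ i|k IH km i]; first by rewrite leqn0 => /eqP->.
rewrite leq_eqVlt ltnS => /orP[/eqP->|]; last by apply: IH; lia.
apply/eqP/negP => hk_neq0; set c := h k.+1 in hk_neq0.
have lin l : (k + l.+1 <= m)%N -> h (k + l)%N = l%:R * c /\ h (k + l.+1)%N = l.+1%:R * c.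
  elim: l => [|l IHl] hl; first by rewrite addn0 addn1 IH ?mul0r ?mul1r //; lia.
  have [hl1 hl2] := IHl ltac:(lia); split=> //.
  have [hl0|] := h_k (k + l.+1)%N ltac:(lia).
    by exfalso; apply: hk_neq0; move/eqP: hl0; rewrite hl2 mulf_eq0 pnatr_eq0.
  have e1 : h (k + l.+2)%N = h (k + l.+1).+1 by rewrite addnS.
  have e2 : h (k + l)%N = h (k + l.+1).-1 by rewrite addnS.
  by rewrite /d2 -e1 -e2 hl1 hl2 e1 -!natr1; lra.
have [_] := lin (m - k).-1 ltac:(lia).
rewrite (_ : k + (m - k).-1.+1 = m)%N; last by lia.
by rewrite hm => /esym/eqP; rewrite mulf_eq0 pnatr_eq0.
Qed.

Lemma sum_d2 m f : \sum_(1 <= k < m.+1) d2 f k = f m.+1 - f m - (f 1%N - f 0%N).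
Proof.
rewrite (@telescope_sumr_eq _ _ _ (fun k => f k - f k.-1)) //.
by move=> k _; rewrite /d2 /=; ring.
Qed.
End SecondDifference.

(* The largest k < i with brk k, and 0 if there is none. *)
Fixpoint prev_break (brk : pred nat) (i : nat) : nat :=
  if i is i'.+1 then (if brk i' then i' else prev_break brk i') else 0.

Section PrevBreak.
Variable brk : pred nat.

Lemma prev_break_lt i : (0 < i)%N -> (prev_break brk i < i)%N.
Proof.
case: i => // i _; elim: i => [|i IH] /=; first by case: (brk 0).
by case: (brk i.+1) => //; apply: leq_trans IH _.
Qed.

Lemma prev_breakP i : brk 0 -> brk (prev_break brk i).
Proof. by move=> brk0; elim: i => [|i IH] //=; case: ifP. Qed.

Lemma prev_break_gap i k : (prev_break brk i < k < i)%N -> ~~ brk k.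
Proof.
elim: i => [|i IH] /=; first by rewrite andbF.
case: ifPn => [_|brk_i]; first by lia.
move=> /andP[lt_k]; rewrite ltnS leq_eqVlt => /orP[/eqP-> //|k_lt].
by apply: IH; rewrite lt_k.
Qed.

End PrevBreak.

Section NextBreak.
Variables (brk : pred nat) (m : nat).

(* Mirror image of prev_break through m: the least k > i with brk k, and m if there is none. *)
Definition next_break i := (m - prev_break (fun k => brk (m - k)%N) (m - i))%N.

Lemma next_break_gt i : (i < m)%N -> (i < next_break i <= m)%N.
Proof.
by rewrite /next_break => im; have := @prev_break_lt (fun k => brk (m - k)%N) (m - i); lia.
Qed.

Lemma next_breakP i : brk m -> brk (next_break i).
Proof. by move=> brkm; apply: (@prev_breakP (fun k => brk (m - k)%N)); rewrite subn0. Qed.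

Lemma next_break_gap i k : (i < k < next_break i)%N -> ~~ brk k.
Proof.
rewrite /next_break => ik; have /prev_break_gap : 
  (prev_break (fun k => brk (m - k)%N) (m - i) < m - k < m - i)%N by lia.
by rewrite subKn //; lia.
Qed.

Lemma next_breakS i : (i < m)%N -> next_break i = if brk i.+1 then i.+1 else next_break i.+1.
Proof.
move=> im; rewrite /next_break (_ : m - i = (m - i.+1).+1)%N /=; last by lia.
by rewrite subKn //; case: ifP => _ //; rewrite subKn.
Qed.

Lemma break_outside_run i j : brk i -> ~~ brk j ->
  (i <= prev_break brk j)%N || (next_break j <= i)%N.
Proof.
move=> brk_i brk_j; case: (leqP i (prev_break brk j)) => //= Pi; case: leqP => //= iQ.
case: (ltngtP i j) => [ij|ji|ij]; last by move: brk_j; rewrite -ij brk_i.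
  by have := @prev_break_gap brk j i; rewrite Pi ij brk_i; apply.
by have := @next_break_gap j i; rewrite iQ ji brk_i; apply.
Qed.

End NextBreak.

Section RunParabola.
Variables (R : realDomainType) (brk : pred nat) (m : nat).
Hypotheses (brk0 : brk 0) (brkm : brk m).

Definition run_parabola i : R :=
  if brk i then 0 else (i%:R - (prev_break brk i)%:R) * ((next_break brk m i)%:R - i%:R).

Lemma run_parabola_gt0 i : (i <= m)%N -> ~~ brk i -> 0 < run_parabola i.
Proof.
move=> im brk_i; have i_gt0 : (0 < i)%N by case: i brk_i im => //; rewrite brk0.
have im' : (i < m)%N by rewrite ltn_neqAle im andbT; apply: contraNneq brk_i => ->.
have := prev_break_lt brk i_gt0; have := next_break_gt brk im'.
rewrite /run_parabola (negbTE brk_i) => /andP[iQ _] Pi.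
by rewrite mulr_gt0 // subr_gt0 ltr_nat.
Qed.

Lemma run_parabola_ge0 i : (i <= m)%N -> 0 <= run_parabola i.
Proof.
move=> im; case: (boolP (brk i)) => [brk_i|/(run_parabola_gt0 im)/ltW //].
by rewrite /run_parabola brk_i.
Qed.

Lemma d2_run_parab i : (0 < i < m)%N -> ~~ brk i -> d2 run_parabola i = -2.
Proof.
case: i => // i /andP[_ im] brk_i.
set P := prev_break brk i.+1; set Q := next_break brk m i.+1.
have parab_on k : k \in [:: i; i.+1; i.+2] ->
    run_parabola k = (k%:R - P%:R) * (Q%:R - k%:R).
  rewrite !inE => /or3P[] /eqP->.
  - rewrite /run_parabola /P /=; case: ifPn => [_|brk_i']; first by rewrite subrr mul0r.
    by rewrite next_breakS ?(negbTE brk_i) //; lia.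
  - by rewrite /run_parabola (negbTE brk_i).
  - rewrite /run_parabola /Q (next_breakS brk im).
    case: ifPn => [_|brk_i2]; first by rewrite subrr mulr0.
    by rewrite /P /= (negbTE brk_i).
rewrite /d2 /= !parab_on ?inE ?eqxx ?orbT // -!natr1; ring.
Qed.

End RunParabola.

Section Tent.
Variables (R : realDomainType) (p j q : nat).
Hypotheses (pj : (p < j)%N) (jq : (j < q)%N).

(* The Green's function of d2 on [p, q] with pole at j. *)
Definition tent k : R :=
  if (p < k < q)%N then
    if (k <= j)%N then (k%:R - p%:R) * (q%:R - j%:R) else (q%:R - k%:R) * (j%:R - p%:R)
  else 0.

Lemma tent_out k : (k <= p)%N || (q <= k)%N -> tent k = 0.
Proof. by rewrite /tent; case: ifP => //; lia. Qed.

Lemma tent_left k : (p <= k <= j)%N -> tent k = (k%:R - p%:R) * (q%:R - j%:R).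
Proof.
move=> /andP[pk kj]; rewrite /tent; case: ifP => [_|/negbT k_out]; first by rewrite kj.
by rewrite (_ : k = p) ?subrr ?mul0r //; lia.
Qed.

Lemma tent_right k : (j <= k <= q)%N -> tent k = (q%:R - k%:R) * (j%:R - p%:R).
Proof.
move=> /andP[jk kq]; rewrite /tent; case: ifP => [_|/negbT k_out].
  by case: ifP => // kj; rewrite (_ : k = j) 1?mulrC //; lia.
by rewrite (_ : k = q) ?subrr ?mul0r //; lia.
Qed.

Lemma tent_peak : 0 < tent j.
Proof. by rewrite tent_left ?(ltnW pj) ?leqnn // mulr_gt0 // subr_gt0 ltr_nat. Qed.

Lemma d2_tent k : (0 < k)%N -> k != p -> k != j -> k != q -> d2 tent k = 0.
Proof.
case: k => // k _ kp kj kq; rewrite /d2 /=.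
case: (ltnP k.+1 p) => [lt_p|le_p].
  by rewrite !tent_out; [ring | lia..].
case: (ltnP k.+1 j) => [lt_j|le_j].
  by rewrite !tent_left -?natr1; [ring | lia..].
case: (ltnP k.+1 q) => [lt_q|le_q].
  by rewrite !tent_right -?natr1; [ring | lia..].
by rewrite !tent_out; [ring | lia..].
Qed.

End Tent.

Section NatSums.
Variable R : realDomainType.
Implicit Type F : nat -> R.

Lemma sumr_nat_ge0 F m p :
  (forall i, (m <= i < p)%N -> 0 <= F i) -> 0 <= \sum_(m <= i < p) F i.
Proof. by move=> F_ge0; rewrite big_nat_cond sumr_ge0 // => i /andP[/F_ge0]. Qed.

Lemma sumr_nat_subrange_le F m1 n1 m2 n2 : (m2 <= m1)%N -> (m1 <= n1)%N -> (n1 <= n2)%N ->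
  (forall i, (m2 <= i < n2)%N -> 0 <= F i) -> \sum_(m1 <= i < n1) F i <= \sum_(m2 <= i < n2) F i.
Proof.
move=> m21 m1n1 n12 F_ge0.
rewrite (big_cat_nat m21 (leq_trans m1n1 n12)) (big_cat_nat m1n1 n12) /=.
have : 0 <= \sum_(m2 <= i < m1) F i by apply: sumr_nat_ge0 => i ?; apply: F_ge0; lia.
have : 0 <= \sum_(n1 <= i < n2) F i by apply: sumr_nat_ge0 => i ?; apply: F_ge0; lia.
lra.
Qed.

End NatSums.

Section Integer.
Variable R : pzRingType.
Implicit Types x y : R.

Definition integer x := exists z : int, x = z%:~R.

Lemma integer_nat m : integer m%:R.
Proof. by exists m%:Z. Qed.

Lemma integerD x y : integer x -> integer y -> integer (x + y).
Proof. by move=> [z ->] [z' ->]; exists (z + z'); rewrite intrD. Qed.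

Lemma integerN x : integer x -> integer (- x).
Proof. by move=> [z ->]; exists (- z); rewrite intrN. Qed.

Lemma integerB x y : integer x -> integer y -> integer (x - y).
Proof. by move=> ix /integerN; apply: integerD. Qed.

Lemma integerM x y : integer x -> integer y -> integer (x * y).
Proof. by move=> [z ->] [z' ->]; exists (z * z'); rewrite intrM. Qed.

Lemma integer_sum_nat m p (F : nat -> R) :
  (forall i, (m <= i < p)%N -> integer (F i)) -> integer (\sum_(m <= i < p) F i).
Proof.
move=> F_int; rewrite big_nat_cond.
by apply: (big_ind integer) => [|x y|i /andP[/F_int]]; [exists 0 | apply: integerD |].
Qed.

End Integer.

(** * P_d in slack coordinates *)

Section PdCoordinates.
Variables (R : realFieldType) (d : nat).
Hypothesis d_ge3 : (3 <= d)%N.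
Local Notation N := (Pdim d).
Local Notation n := (d - 2)%N.
Local Notation Pd := (@in_Pd R d).
Implicit Types (v w e : 'rV[R]_N) (A B : nat -> R).

(* The coordinates x_k, y_k (1 <= k <= d-2) and z, taken to be 0 for k out of range;
   xr v k = x_(d-1-k), so that xr v 0 = 0. *)
Definition xc v k := if (0 < k <= n)%N then dotr (ex R d k) v else 0.
Definition yc v k := if (0 < k <= n)%N then dotr (ey R d k) v else 0.
Definition zc v := dotr (ez R d) v.
Definition xr v k := xc v (d - 1 - k)%N.
Definition xgap v j := xr v j - xr v j.-1.
Definition ygap v j := yc v j - yc v j.+1.
(* slack v j is S_j; lslack is its linear part. *)
Definition lslack v j :=
  j%:R * zc v + \sum_(1 <= i < j) xr v i - \sum_(1 <= i < j.+1) yc v i.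
Definition slack v j := lslack v j + j%:R * ((d - 1)%:R - j%:R).

Lemma xc_out v k : ~~ (0 < k <= n)%N -> xc v k = 0.
Proof. by rewrite /xc => /negbTE->. Qed.

Lemma yc_out v k : ~~ (0 < k <= n)%N -> yc v k = 0.
Proof. by rewrite /yc => /negbTE->. Qed.

Lemma xr0 v : xr v 0 = 0.
Proof. by rewrite /xr xc_out //; lia. Qed.

Lemma xc_linear k : linear_form (xc ^~ k).
Proof.
by move=> v e t; rewrite /xc; case: ifP => _; [exact: dotr_linear | rewrite mulr0 addr0].
Qed.

Lemma yc_linear k : linear_form (yc ^~ k).
Proof.
by move=> v e t; rewrite /yc; case: ifP => _; [exact: dotr_linear | rewrite mulr0 addr0].
Qed.

Lemma xgap_linear j : linear_form (xgap ^~ j).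
Proof. by move=> v e t; rewrite /xgap /xr !xc_linear; ring. Qed.

Lemma ygap_linear j : linear_form (ygap ^~ j).
Proof. by move=> v e t; rewrite /ygap !yc_linear; ring. Qed.

Lemma lslack_linear j : linear_form (lslack ^~ j).
Proof.
move=> v e t; rewrite /lslack /zc dotr_linear.
under eq_bigr do rewrite /xr xc_linear.
under [in X in _ - X]eq_bigr do rewrite yc_linear.
by rewrite !big_split -!mulr_sumr /=; ring.
Qed.

Lemma slackD v e t j : slack (v + t *: e) j = slack v j + t * lslack e j.
Proof. by rewrite /slack lslack_linear; ring. Qed.

Lemma lslack0 v : lslack v 0 = 0.
Proof. by rewrite /lslack !big_geq // mul0r; ring. Qed.

Lemma slack0 v : slack v 0 = 0.
Proof. by rewrite /slack lslack0 mul0r addr0. Qed.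

Lemma slack_end v : slack v (d - 1) = lslack v (d - 1).
Proof. by rewrite /slack subrr mulr0 addr0. Qed.

Lemma lslackS v j : lslack v j.+1 - lslack v j = zc v + xr v j - yc v j.+1.
Proof.
rewrite /lslack (big_nat_recr j.+1) //=; case: j => [|j].
  by rewrite !big_geq // xr0; ring.
by rewrite (big_nat_recr j.+1) //= -natr1; ring.
Qed.

Lemma lslack_d2 v j : (0 < j)%N -> d2 (lslack v) j = xgap v j + ygap v j.
Proof.
case: j => // j _; have := lslackS v j.+1; have := lslackS v j.
by rewrite /d2 /xgap /ygap /=; lra.
Qed.

Lemma slack_d2 v j : (0 < j)%N -> d2 (slack v) j = xgap v j + ygap v j - 2.
Proof.
case: j => // j _; have := lslack_d2 v (ltn0Sn j).
by rewrite /d2 /slack /= -!natr1; lra.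
Qed.

Lemma xr_sum_xgap v i : xr v i = \sum_(1 <= j < i.+1) xgap v j.
Proof.
by rewrite (@telescope_sumr_eq _ _ _ (fun k => xr v k.-1)) //= xr0 subr0.
Qed.

Lemma yc_sum_ygap v k : yc v k = \sum_(k <= j < d - 1) ygap v j.
Proof.
case: (leqP k (d - 1)) => kd; last by rewrite big_geq ?yc_out //; lia.
rewrite (@telescope_sumr_eq _ _ _ (fun j => - yc v j)) // => [|j _]; last by rewrite /ygap; ring.
by rewrite (@yc_out v (d - 1)); [ring | lia].
Qed.

Lemma zc_slack1 v : zc v = slack v 1 + yc v 1 - n%:R.
Proof.
by rewrite /slack /lslack big_geq // big_nat1 !natrB; [ring | lia..].
Qed.

Definition slack_con j : 'rV[R]_N * R :=
  (j%:R *: ez R d + \sum_(0 <= i < j - 1) ex R d (d - 2 - i) - \sum_(1 <= i < j.+1) ey R d i,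
   (j * (d - 1 - j))%:R).

Lemma cval_slack_con v j : (0 < j <= n)%N -> cval (slack_con j) v = slack v j.
Proof.
move=> jn; rewrite cvalE /= dotrBl dotrDl dotrZl !dotr_suml /slack /lslack natrM.
rewrite !natrB; [| lia..].
congr (_ * _ + _ - _ + _).
  rewrite big_add1 subn1; apply: eq_big_nat => i ij; rewrite /xr /xc ifT; last by lia.
  by congr dotr; congr ex; lia.
by apply: eq_big_nat => i ij; rewrite /yc ifT //; lia.
Qed.

Lemma cval_Pd_eq v : cval (Pd_eq R d) v = - slack v (d - 1).
Proof.
rewrite cvalE /= addr0 !dotrBl dotrZl !dotr_suml slack_end /lslack.
rewrite big_nat_recr /= ?yc_out ?addr0; [| lia..].
rewrite [\sum_(1 <= i < d - 1) xr v i]big_nat_rev /=.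
have -> : \sum_(1 <= i < d - 1) dotr (ex R d i) v =
    \sum_(1 <= i < d - 1) xr v (1 + (d - 1) - i.+1)%N.
  by apply: eq_big_nat => i ij; rewrite /xr /xc ifT; [congr dotr; congr ex | ]; lia.
have -> : \sum_(1 <= i < d - 1) dotr (ey R d i) v = \sum_(1 <= i < d - 1) yc v i.
  by apply: eq_big_nat => i ij; rewrite /yc ifT //; lia.
by rewrite /zc; ring.
Qed.

Lemma xc_xr v k : (0 < k <= n)%N -> xc v k = xr v (d - 1 - k).
Proof. by move=> kn; rewrite /xr subKn //; lia. Qed.

Lemma xgap1 v : xgap v 1 = xc v n.
Proof. by rewrite /xgap xr0 subr0 /xr (_ : d - 1 - 1 = n)%N //; lia. Qed.

Lemma ygap_last v : ygap v n = yc v n.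
Proof. by rewrite /ygap (@yc_out v n.+1) ?subr0 //; lia. Qed.

(* k = 0, 1, 2 select S_j, a_j = xgap v j and b_j = ygap v j; larger k give 0. *)
Definition slacks v j k : R := nth 0 [:: slack v j; xgap v j; ygap v j] k.
Definition dslacks e j k : R := nth 0 [:: lslack e j; xgap e j; ygap e j] k.

Definition slack_feasible v :=
  (forall j k, (0 < j <= n)%N -> 0 <= slacks v j k) /\ slack v (d - 1) = 0.

Lemma cval_ex v j : (0 < j <= n)%N -> cval (ex R d j, 0) v = xc v j.
Proof. by move=> jn; rewrite cvalE addr0 /xc jn. Qed.

Lemma cval_ey v j : (0 < j <= n)%N -> cval (ey R d j, 0) v = yc v j.
Proof. by move=> jn; rewrite cvalE addr0 /yc jn. Qed.

Lemma cval_xdiff v j : (0 < j < n)%N -> cval (ex R d j - ex R d j.+1, 0) v = xgap v (d - 1 - j).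
Proof.
move=> jn; rewrite cvalE addr0 dotrBl /xgap /xr (_ : d - 1 - (d - 1 - j) = j)%N; last by lia.
by rewrite (_ : d - 1 - (d - 1 - j).-1 = j.+1)%N /xc ?ifT //; lia.
Qed.

Lemma cval_ydiff v j : (0 < j < n)%N -> cval (ey R d j - ey R d j.+1, 0) v = ygap v j.
Proof. by move=> jn; rewrite cvalE addr0 dotrBl /ygap /yc !ifT //; lia. Qed.

Lemma Pd_ineqs_slacks v j k : (0 < j <= n)%N -> (k < 3)%N ->
  exists2 c, c \in Pd_ineqs R d & slacks v j k = cval c v.
Proof.
move=> jn; rewrite /slacks; case: k => [|[|[|//]]] _ /=.
- exists (slack_con j); last by rewrite cval_slack_con.
  by rewrite /Pd_ineqs !mem_cat (map_f slack_con) ?orbT // mem_iota; lia.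
- have [->|j1] := eqVneq j 1%N.
    exists (ex R d n, 0); last by rewrite xgap1 cval_ex //; lia.
    by rewrite /Pd_ineqs !mem_cat (map_f (fun j => (ex R d j, 0))) ?orbT // mem_iota; lia.
  have jj : (d - 1 - (d - 1 - j) = j)%N by lia.
  exists (ex R d (d - 1 - j) - ex R d (d - 1 - j).+1, 0); last by rewrite cval_xdiff ?jj //; lia.
  by rewrite /Pd_ineqs !mem_cat (map_f (fun j => (ex R d j - ex R d j.+1, 0))) // mem_iota; lia.
- have [->|jn'] := eqVneq j n.
    exists (ey R d n, 0); last by rewrite ygap_last cval_ey //; lia.
    by rewrite /Pd_ineqs !mem_cat (map_f (fun j => (ey R d j, 0))) ?orbT // mem_iota; lia.
  exists (ey R d j - ey R d j.+1, 0); last by rewrite cval_ydiff //; lia.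
  rewrite /Pd_ineqs !mem_cat (map_f (fun j => (ey R d j - ey R d j.+1, 0))) ?orbT //.
  by rewrite mem_iota; lia.
Qed.

Lemma Pd_ineqs_ge0 v c : slack_feasible v -> c \in Pd_ineqs R d -> 0 <= cval c v.
Proof.
move=> [v_slacks _]; have xgap_ge0 j : (0 < j <= n)%N -> 0 <= xgap v j := v_slacks j 1%N.
have ygap_ge0 j : (0 < j <= n)%N -> 0 <= ygap v j := v_slacks j 2%N.
rewrite !mem_cat => /or4P[|||/orP[]] /mapP[j]; rewrite mem_iota => j_in ->.
- by rewrite cval_xdiff; [apply: xgap_ge0 | ]; lia.
- by rewrite cval_ydiff; [apply: ygap_ge0 | ]; lia.
- rewrite cval_ex ?xc_xr ?xr_sum_xgap; try lia.
  by apply: sumr_nat_ge0 => i i_in; apply: xgap_ge0; lia.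
- rewrite cval_ey ?yc_sum_ygap; try lia.
  by apply: sumr_nat_ge0 => i i_in; apply: ygap_ge0; lia.
- by rewrite cval_slack_con; [apply: (v_slacks j 0%N) | ]; lia.
Qed.

Lemma in_PdP v : in_Pd v <-> slack_feasible v.
Proof.
split=> [[v_ineqs v_eq]|v_feas].
  split=> [j k jn|]; last by move: v_eq; rewrite cval_Pd_eq => /eqP; rewrite oppr_eq0 => /eqP.
  case: (ltnP k 3) => [k3|k3]; last by rewrite /slacks nth_default.
  by have [c c_in ->] := Pd_ineqs_slacks v jn k3; apply: v_ineqs.
split=> [c|]; first exact: Pd_ineqs_ge0.
by rewrite cval_Pd_eq v_feas.2 oppr0.
Qed.

Lemma in_Pd_feasible w : Pd w <->
  (forall c, c \in Pd_ineqs R d -> 0 <= cval c w) /\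
  (forall c, c \in [:: Pd_eq R d] -> cval c w = 0).
Proof.
split=> [[w_ineqs w_eq]|[w_ineqs w_eq]]; split=> //; last exact: w_eq (mem_head _ _).
by move=> c; rewrite mem_seq1 => /eqP->.
Qed.

Lemma is_vertex_PdP v : is_vertex_Pd v <-> extreme Pd v.
Proof. exact: (vertexP in_Pd_feasible). Qed.

Lemma coord_cases (i : 'I_N) :
  [\/ exists2 k, (0 < k <= n)%N & forall v, v 0 i = xc v k,
      exists2 k, (0 < k <= n)%N & forall v, v 0 i = yc v k
    | forall v, v 0 i = zc v].
Proof.
have dotr_i l v : l = i :> nat -> dotr (ecoord R N l) v = v 0 i.
  move=> li; have l_lt : (l < N)%N by rewrite li.
  by rewrite (dotr_ecoord _ l_lt); congr (v 0 _); apply: val_inj.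
have iN : (i < 2 * d - 3)%N := ltn_ord i.
case: (ltnP i n) => [i_lt|i_ge].
  by apply: Or31; exists i.+1 => [|v]; rewrite /xc ?ifT ?dotr_i //; lia.
case: (ltnP i (n + n)) => [i_lt2|i_ge2].
  by apply: Or32; exists (i - n).+1 => [|v]; rewrite /yc ?ifT ?dotr_i //; lia.
by apply: Or33 => v; rewrite /zc dotr_i //; lia.
Qed.

Lemma slacks_inj v w : (forall j k, (0 < j <= n)%N -> slacks v j k = slacks w j k) ->
  slack v (d - 1) = slack w (d - 1) -> v = w.
Proof.
move=> vw_slacks vw_end.
have xr_eq i : (i <= n)%N -> xr v i = xr w i.
  by move=> ?; rewrite !xr_sum_xgap; apply: eq_big_nat => j ?; apply: (vw_slacks j 1%N); lia.
have yc_eq k : (0 < k)%N -> yc v k = yc w k.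
  by move=> ?; rewrite !yc_sum_ygap; apply: eq_big_nat => j ?; apply: (vw_slacks j 2%N); lia.
have zc_eq : zc v = zc w.
  have sum_x : \sum_(1 <= i < d - 1) xr v i = \sum_(1 <= i < d - 1) xr w i.
    by apply: eq_big_nat => i ?; apply: xr_eq; lia.
  have sum_y : \sum_(1 <= i < (d - 1).+1) yc v i = \sum_(1 <= i < (d - 1).+1) yc w i.
    by apply: eq_big_nat => i ?; apply: yc_eq; lia.
  move: vw_end; rewrite !slack_end /lslack sum_x sum_y => vw.
  have /eqP : (d - 1)%:R * (zc v - zc w) = 0 by lra.
  by rewrite mulf_eq0 pnatr_eq0 subr_eq0 => /orP[|/eqP //]; lia.
apply/rowP => i; case: (coord_cases i) => [[k kn vi]|[k kn vi]|vi]; rewrite !vi //.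
  by rewrite !xc_xr ?xr_eq //; lia.
by rewrite yc_eq //; lia.
Qed.

Definition mkrow (x y : nat -> R) (z : R) : 'rV[R]_N :=
  \row_(i < N) if (i < n)%N then x i.+1 else if (i < n + n)%N then y (i - n).+1 else z.

Lemma dotr_mkrow x y z i : (i < N)%N -> dotr (ecoord R N i) (mkrow x y z) =
  if (i < n)%N then x i.+1 else if (i < n + n)%N then y (i - n).+1 else z.
Proof. by move=> iN; rewrite (dotr_ecoord _ iN) mxE. Qed.

Lemma xc_mkrow x y z k : (0 < k <= n)%N -> xc (mkrow x y z) k = x k.
Proof.
move=> kn; rewrite /xc kn dotr_mkrow /Pdim ?ifT; try lia.
by congr x; lia.
Qed.

Lemma yc_mkrow x y z k : (0 < k <= n)%N -> yc (mkrow x y z) k = y k.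
Proof.
move=> kn; have kN : (d - 2 + (k - 1) < N)%N by rewrite /Pdim; lia.
rewrite /yc kn (dotr_mkrow _ _ _ kN) ifN; last by lia.
by rewrite ifT; [congr y | ]; lia.
Qed.

Lemma zc_mkrow x y z : zc (mkrow x y z) = z.
Proof. by rewrite /zc dotr_mkrow ?ifN //; rewrite /Pdim; lia. Qed.

(* The point with gaps A and B; z is chosen so that S_(d-1) = 0. *)
Definition build A B : 'rV[R]_N :=
  mkrow (fun k => \sum_(1 <= j < d - k) A j) (fun k => \sum_(k <= j < d - 1) B j)
    ((\sum_(1 <= i < d - 1) \sum_(i <= j < d - 1) B j
      - \sum_(1 <= i < d - 1) \sum_(1 <= j < i.+1) A j) / (d - 1)%:R).

Lemma xr_build A B i : (i <= n)%N -> xr (build A B) i = \sum_(1 <= j < i.+1) A j.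
Proof.
case: i => [_|i i_le]; first by rewrite xr0 big_geq.
rewrite /xr xc_mkrow /=; last by lia.
by rewrite (_ : d - (d - 1 - i.+1) = i.+2)%N; last by lia.
Qed.

Lemma yc_build A B k : (0 < k)%N -> yc (build A B) k = \sum_(k <= j < d - 1) B j.
Proof.
move=> k_gt0; case: (leqP k n) => kn; last by rewrite yc_out ?big_geq //; lia.
by rewrite yc_mkrow // k_gt0.
Qed.

Lemma xgap_build A B j : (0 < j <= n)%N -> xgap (build A B) j = A j.
Proof.
case: j => // j jn; rewrite /xgap !xr_build; try lia.
by rewrite big_nat_recr //=; ring.
Qed.

Lemma ygap_build A B j : (0 < j <= n)%N -> ygap (build A B) j = B j.
Proof.
move=> jn; rewrite /ygap !yc_build; try lia.
by rewrite big_ltn; [ring | lia].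
Qed.

Lemma lslack_build_end A B : lslack (build A B) (d - 1) = 0.
Proof.
rewrite /lslack (big_nat_recr (d - 1)) /=; last by lia.
rewrite [yc _ (d - 1)]yc_out ?addr0; last by lia.
have -> : \sum_(1 <= i < d - 1) xr (build A B) i =
    \sum_(1 <= i < d - 1) \sum_(1 <= j < i.+1) A j.
  by apply: eq_big_nat => i ?; apply: xr_build; lia.
have -> : \sum_(1 <= i < d - 1) yc (build A B) i =
    \sum_(1 <= i < d - 1) \sum_(i <= j < d - 1) B j.
  by apply: eq_big_nat => i ?; apply: yc_build; lia.
rewrite zc_mkrow mulrC divfK; first by ring.
by rewrite pnatr_eq0; lia.
Qed.

Lemma lslack_build A B g : g 0%N = 0 -> g (d - 1)%N = 0 ->
  (forall j, (0 < j <= n)%N -> d2 g j = A j + B j) ->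
  forall j, (j <= d - 1)%N -> lslack (build A B) j = g j.
Proof.
move=> g0 g_end g_d2; apply: d2_unique; rewrite ?lslack0 ?lslack_build_end // => j jd.
by right; rewrite lslack_d2 ?xgap_build ?ygap_build ?g_d2 //; lia.
Qed.

(** * Extreme points of P_d *)

Lemma slacksD v e t j k : slacks (v + t *: e) j k = slacks v j k + t * dslacks e j k.
Proof.
rewrite /slacks /dslacks; case: k => [|[|[|k]]] /=.
- exact: slackD.
- exact: xgap_linear.
- exact: ygap_linear.
by rewrite !nth_nil mulr0 addr0.
Qed.

Lemma slacks_midpoint p q v j k :
  p + q = v + v -> slacks p j k + slacks q j k = slacks v j k + slacks v j k.
Proof.
move=> pq; have ep : p = v + 1 *: (p - v) by rewrite scale1r addrC subrK.
have eq : q = v + (-1) *: (p - v) by rewrite scaleN1r opprB addrA -pq addrAC subrr add0r.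
by rewrite {1}ep {1}eq !slacksD; ring.
Qed.

Lemma slack_ge0 v i : slack_feasible v -> (i <= d - 1)%N -> 0 <= slack v i.
Proof.
case=> v_slacks v_end; case: i => [_|i id]; first by rewrite slack0.
case: (ltnP i.+1 (d - 1)) => [i_lt|i_ge]; first by apply: (v_slacks i.+1 0%N); lia.
by rewrite (_ : i.+1 = d - 1)%N ?v_end //; lia.
Qed.

Lemma slack0_gaps_ge2 v i : slack_feasible v -> (0 < i <= n)%N -> slack v i = 0 ->
  2 <= xgap v i + ygap v i.
Proof.
case: i => // i v_feas i_in si.
have [i_le i2_le] : (i <= d - 1)%N /\ (i.+2 <= d - 1)%N by split; lia.
have := slack_ge0 v_feas i_le; have := slack_ge0 v_feas i2_le.
by have := slack_d2 v (ltn0Sn i); rewrite /d2 si /=; lra.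
Qed.

Lemma slack_perturb v e : slack_feasible v -> lslack e (d - 1) = 0 ->
  (forall j k, (0 < j <= n)%N -> slacks v j k = 0 -> dslacks e j k = 0) ->
  exists2 t, 0 < t & slack_feasible (v + t *: e) /\ slack_feasible (v - t *: e).
Proof.
move=> [v_slacks v_end] e_end e_tight.
pose jks := [seq (j, k) | j <- iota 1 n, k <- iota 0 3].
have /small_perturbation[t t_gt0 ht] : forall p, p \in jks ->
    0 <= slacks v p.1 p.2 /\ (slacks v p.1 p.2 = 0 -> dslacks e p.1 p.2 = 0).
  move=> _ /allpairsP[[j k] [/= + _ ->]]; rewrite mem_iota add1n ltnS => jn.
  by split; [apply: v_slacks | apply: e_tight].
have feas s : s = t \/ s = - t -> slack_feasible (v + s *: e).
  move=> st; split=> [j k jn|]; last by rewrite slackD v_end e_end mulr0 addr0.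
  case: (ltnP k 3) => [k3|k3]; last by rewrite /slacks nth_default.
  have /ht[] : (j, k) \in jks by rewrite allpairs_f // mem_iota; lia.
  by rewrite slacksD /=; case: st => ->; lra.
by exists t => //; split; [|rewrite -scaleNr]; apply: feas; [left | right].
Qed.

Lemma extreme_dslacks_eq0 v e : extreme Pd v -> lslack e (d - 1) = 0 ->
  (forall j k, (0 < j <= n)%N -> slacks v j k = 0 -> dslacks e j k = 0) -> e = 0.
Proof.
move=> v_ext e_end e_tight.
have [t t_gt0 [feas_p feas_m]] := slack_perturb (proj1 (in_PdP v) v_ext.1) e_end e_tight.
by apply: (extreme_segment_eq0 v_ext (lt0r_neq0 t_gt0)); apply/in_PdP.
Qed.

Lemma extreme_xgap_ygap v j : extreme Pd v -> (0 < j <= n)%N -> xgap v j = 0 \/ ygap v j = 0.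
Proof.
move=> v_ext jn; have [|xgj] := eqVneq (xgap v j) 0; [by left | right].
apply/eqP/negP => ygj.
pose delta i : R := (i == j)%:R.
(* Trading b_j for a_j leaves S unchanged. *)
pose e := build delta (fun i => - delta i).
have e_lslack i : (i <= d - 1)%N -> lslack e i = 0.
  by apply: (lslack_build (g := fun=> 0)) => // i' _; rewrite /d2; ring.
have : e = 0.
  apply: (extreme_dslacks_eq0 v_ext) => [|i [|[|[|k]]] i_in]; first exact: e_lslack.
  - by rewrite /dslacks /= e_lslack //; lia.
  - rewrite /slacks /dslacks /= xgap_build // /delta.
    by case: eqP => [-> /eqP|//]; rewrite (negbTE xgj).
  - rewrite /slacks /dslacks /= ygap_build // /delta.
    by case: eqP => [-> /eqP|_ _]; rewrite ?(negbTE ygj) ?oppr0.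
  - by rewrite /dslacks /= nth_nil.
move/(congr1 (xgap^~ j)); rewrite xgap_build // (linear_form0 (xgap_linear j)) /delta eqxx.
by move/eqP; rewrite oner_eq0.
Qed.

Lemma extreme_slack_gaps v j : extreme Pd v -> (0 < j <= n)%N -> slack v j != 0 ->
  xgap v j = 0 /\ ygap v j = 0.
Proof.
move=> v_ext jn sj; have v_feas := proj1 (in_PdP v) v_ext.1.
have [/andP[/eqP-> /eqP->] //|gaps] := boolP ((xgap v j == 0) && (ygap v j == 0)).
exfalso; pose brk i := slack v i == 0.
have brk0 : brk 0%N by rewrite /brk slack0.
have brk_end : brk (d - 1)%N by rewrite /brk v_feas.2.
set P := prev_break brk j; set Q := next_break brk (d - 1) j.
have Pj : (P < j)%N by apply: prev_break_lt; lia.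
have /andP[jQ Qd] : (j < Q <= d - 1)%N by apply: next_break_gt; lia.
(* S is nonzero on (P, Q), so we may perturb S by the tent on [P, Q]; its second
   difference lives at P, j and Q, where a or b is positive. *)
pose T := tent R P j Q.
pose A i := if xgap v i != 0 then d2 T i else 0.
pose B i := if xgap v i != 0 then 0 else d2 T i.
have e_lslack i : (i <= d - 1)%N -> lslack (build A B) i = T i.
  apply: lslack_build; [by rewrite /T tent_out | by rewrite /T tent_out // Qd orbT | move=> i' _].
  by rewrite /A /B; case: ifP; rewrite ?addr0 ?add0r.
have gaps_brk i : (0 < i <= n)%N -> brk i -> xgap v i != 0 \/ ygap v i != 0.
  move=> i_in /eqP/(slack0_gaps_ge2 v_feas i_in) gaps2.
  by case: eqP => [xgi|]; [right; apply/eqP => ygi; move: gaps2; rewrite xgi ygi; lra | left].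
have : build A B = 0.
  apply: (extreme_dslacks_eq0 v_ext) => [|i [|[|[|k]]] i_in]; rewrite ?e_lslack //.
  - by rewrite /T tent_out // Qd orbT.
  - move=> /eqP si; rewrite /dslacks /= e_lslack /T ?tent_out //; last by lia.
    by apply: break_outside_run; rewrite /brk ?si.
  - by rewrite /slacks /dslacks /= xgap_build // /A => ->; rewrite eqxx.
  - rewrite /slacks /dslacks /= ygap_build // /B; case: eqP => // xgi ygi.
    apply: (d2_tent _ Pj jQ); [lia | apply/eqP => iP | apply/eqP => ij | apply/eqP => iQ].
    + have brk_i : brk i by rewrite iP; exact: prev_breakP brk0.
      by have [] := gaps_brk i i_in brk_i; rewrite ?xgi ?ygi eqxx.
    + by move: gaps; rewrite -ij xgi ygi !eqxx.
    + have brk_i : brk i by rewrite iQ; exact: next_breakP brk_end.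
      by have [] := gaps_brk i i_in brk_i; rewrite ?xgi ?ygi eqxx.
move/(congr1 (lslack^~ j)); rewrite e_lslack; last by lia.
by rewrite (linear_form0 (lslack_linear j)) /T => T0; have := tent_peak R Pj jQ; rewrite -T0 ltxx.
Qed.

Definition fits (c : nat -> 'I_3) v :=
  forall j (k : nat), (0 < j <= n)%N -> k != c j -> slacks v j k = 0.

Definition pat v j : 'I_3 :=
  inord (if slack v j != 0 then 0%N else if xgap v j != 0 then 1%N else 2%N).

Lemma extreme_fits v : extreme Pd v -> fits (pat v) v.
Proof.
move=> v_ext j k jn; rewrite /pat inordK; last by case: ifP => //; case: ifP.
rewrite /slacks; case: ifPn => [sj|/negPn/eqP sj].
  have [xgj ygj] := extreme_slack_gaps v_ext jn sj.
  by case: k => [|[|[|k]]] //= _; rewrite ?xgj ?ygj ?nth_nil.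
case: ifPn => [xgj|/negPn/eqP xgj].
  have [/eqP|ygj] := extreme_xgap_ygap v_ext jn; first by rewrite (negbTE xgj).
  by case: k => [|[|[|k]]] //= _; rewrite ?sj ?ygj ?nth_nil.
by case: k => [|[|[|k]]] //= _; rewrite ?sj ?xgj ?nth_nil.
Qed.

Lemma fits_ext c c' v : (forall j, (0 < j <= n)%N -> c j = c' j) -> fits c v -> fits c' v.
Proof. by move=> cc' c_fits j k jn; rewrite -cc' //; apply: c_fits. Qed.

Lemma coord_integer v : (forall j k, (0 < j <= n)%N -> integer (slacks v j k)) ->
  forall i : 'I_N, integer (v 0 i).
Proof.
move=> v_int i.
have yc_int k : (0 < k)%N -> integer (yc v k).
  move=> k_gt0; rewrite yc_sum_ygap; apply: integer_sum_nat => j ?.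
  by apply: (v_int j 2%N); lia.
case: (coord_cases i) => [[k kn ->]|[k kn ->]|->]; last 1 first.
- rewrite zc_slack1; apply: integerB (integerD _ (yc_int _ _)) (integer_nat _ _) => //.
  by apply: (v_int 1%N 0%N); lia.
- rewrite xc_xr // xr_sum_xgap; apply: integer_sum_nat => j ?.
  by apply: (v_int j 1%N); lia.
- by apply: yc_int; lia.
Qed.

Section PatternVertex.
Variable c : nat -> 'I_3.

(* The zeros of S for the pattern c. *)
Definition pattern_break (i : nat) := [|| i == 0%N, i == (d - 1)%N | c i != 0 :> nat].
Definition parab := run_parabola R pattern_break (d - 1).
Definition free_slack j := if c j == 0 :> nat then parab j else d2 parab j + 2.

Definition vtx := build (fun j => if c j == 1 :> nat then free_slack j else 0)
                        (fun j => if c j == 2 :> nat then free_slack j else 0).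

Lemma pattern_break0 : pattern_break 0. Proof. by []. Qed.
Lemma pattern_break_end : pattern_break (d - 1)%N. Proof. by rewrite /pattern_break eqxx orbT. Qed.

Lemma parab_ge0 i : (i <= d - 1)%N -> 0 <= parab i.
Proof. exact: run_parabola_ge0 pattern_break0 pattern_break_end i. Qed.

Lemma parab_brk i : pattern_break i -> parab i = 0.
Proof. by rewrite /parab /run_parabola => ->. Qed.

Lemma free_slack_gt0 j : (0 < j <= n)%N -> 0 < free_slack j.
Proof.
move=> jn; rewrite /free_slack; case: eqP => [cj|/eqP cj].
  apply: run_parabola_gt0 pattern_break0 pattern_break_end _ _ _; first by lia.
  by rewrite /pattern_break cj eqxx orbF; apply/norP; split; apply/eqP; lia.
have brk_j : pattern_break j by rewrite /pattern_break cj !orbT.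
have [j1 j2] : (j.+1 <= d - 1)%N /\ (j.-1 <= d - 1)%N by split; lia.
by have := parab_ge0 j1; have := parab_ge0 j2; rewrite /d2 (parab_brk brk_j); lra.
Qed.

Lemma d2_parab i : (0 < i <= n)%N -> c i = 0 :> nat -> d2 parab i = -2.
Proof. by move=> i_in ci; apply: d2_run_parab; rewrite ?/pattern_break ?ci; lia. Qed.

Lemma slack_vtx i : (i <= d - 1)%N -> slack vtx i = parab i.
Proof.
apply: d2_unique; rewrite ?slack0 ?slack_end ?lslack_build_end ?parab_brk ?pattern_break_end //.
move=> i' i_in; have i_in' : (0 < i' <= n)%N by lia.
right; rewrite slack_d2 ?xgap_build ?ygap_build //; last by lia.
rewrite /free_slack; case: (eqVneq (c i' : nat) 0%N) => ci.
  by rewrite ci /= (d2_parab i_in' ci); ring.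
by move: (ltn_ord (c i')) ci; case: (nat_of_ord (c i')) => [|[|[|]]] //= _ _; ring.
Qed.

Lemma slacks_vtx j k : (0 < j <= n)%N -> slacks vtx j k = if k == c j then free_slack j else 0.
Proof.
move=> jn; rewrite /slacks /free_slack; case: k => [|[|[|k]]] /=.
- rewrite slack_vtx; last by lia.
  by rewrite eq_sym; case: eqP => // /eqP cj; rewrite parab_brk // /pattern_break cj !orbT.
- by rewrite xgap_build // eq_sym.
- by rewrite ygap_build // eq_sym.
- by rewrite nth_nil; case: eqP => // kc; move: (ltn_ord (c j)); rewrite -kc.
Qed.

Lemma vtx_feasible : slack_feasible vtx.
Proof.
split=> [j k jn|]; last by rewrite slack_vtx ?parab_brk ?pattern_break_end.
by rewrite slacks_vtx //; case: eqP => // _; apply/ltW/free_slack_gt0.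
Qed.

Lemma vtx_fits : fits c vtx.
Proof. by move=> j k jn /negbTE kc; rewrite slacks_vtx // kc. Qed.

Lemma fits_slacks w : slack_feasible w -> fits c w ->
  forall j k, (0 < j <= n)%N -> slacks w j k = slacks vtx j k.
Proof.
move=> [w_slacks w_end] w_fits.
have w_parab i : (i <= d - 1)%N -> slack w i = parab i.
  apply: d2_unique; [by rewrite slack0 parab_brk | by rewrite w_end parab_brk ?pattern_break_end |].
  move=> i' i_in; have i_in' : (0 < i' <= n)%N by lia.
  case: (eqVneq (c i' : nat) 0%N) => ci; [right | left].
    have xg0 : xgap w i' = 0 by apply: (w_fits i' 1%N); rewrite // ci.
    have yg0 : ygap w i' = 0 by apply: (w_fits i' 2%N); rewrite // ci.
    by rewrite slack_d2 ?(d2_parab i_in' ci) ?xg0 ?yg0; [ring | lia].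
  have s0 : slack w i' = 0 by apply: (w_fits i' 0%N); rewrite // eq_sym.
  by rewrite s0 parab_brk // /pattern_break ci !orbT.
move=> j k jn; rewrite slacks_vtx //; case: eqP => [->|/eqP kc]; last exact: w_fits.
have gaps : d2 parab j = xgap w j + ygap w j - 2.
  by rewrite -slack_d2 /d2 ?w_parab //; lia.
move: (w_fits j 1%N jn) (w_fits j 2%N jn) (ltn_ord (c j)); rewrite /free_slack /slacks.
case: (nat_of_ord (c j)) => [|[|[|//]]] /= xg0 yg0 _.
- by apply: w_parab; lia.
- by rewrite gaps yg0 //; ring.
- by rewrite gaps xg0 //; ring.
Qed.

Lemma fits_unique w : slack_feasible w -> fits c w -> w = vtx.
Proof.
move=> w_feas w_fits; apply: slacks_inj; first exact: fits_slacks.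
by rewrite w_feas.2 vtx_feasible.2.
Qed.

Lemma vtx_extreme : extreme Pd vtx.
Proof.
split; first by apply/in_PdP; exact: vtx_feasible.
move=> p q /in_PdP p_feas /in_PdP q_feas pq.
apply: (fits_unique p_feas) => j k jn kc.
have := slacks_midpoint j k pq; rewrite (vtx_fits jn kc).
by have := p_feas.1 j k jn; have := q_feas.1 j k jn; lra.
Qed.

Lemma parab_integer i : integer (parab i).
Proof.
rewrite /parab /run_parabola; case: ifP => _; first exact: (integer_nat _ 0).
by apply: integerM; apply: integerB; apply: integer_nat.
Qed.

Lemma vtx_integer (i : 'I_N) : integer (vtx 0 i).
Proof.
apply: coord_integer => j k jn; rewrite slacks_vtx //.
case: ifP => _; last exact: (integer_nat _ 0).
rewrite /free_slack /d2; case: ifP => _; first exact: parab_integer.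
apply: integerD; last exact: (integer_nat _ 2).
apply: integerD; last exact: parab_integer.
by apply: integerB; [|apply: integerM; [exact: (integer_nat _ 2)|]]; exact: parab_integer.
Qed.

End PatternVertex.

Lemma vtx_inj c c' : vtx c = vtx c' -> forall j, (0 < j <= n)%N -> c j = c' j.
Proof.
move=> cc' j jn; apply/val_inj/eqP/negPn/negP => cj.
have := slacks_vtx c (c j) jn; rewrite eqxx cc' slacks_vtx // (negbTE cj) => /esym f0.
by have := free_slack_gt0 c jn; rewrite f0 ltxx.
Qed.

Lemma extreme_vtx v : extreme Pd v -> v = vtx (pat v).
Proof. by move=> v_ext; apply: fits_unique (proj1 (in_PdP v) v_ext.1) (extreme_fits v_ext). Qed.

Lemma sum_gaps v : slack_feasible v ->
  \sum_(1 <= j < d - 1) xgap v j + \sum_(1 <= j < d - 1) ygap v j + slack v 1 + slack v n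
  = (2 * n)%:R.
Proof.
case=> _ v_end; have := sum_d2 n (slack v); rewrite (_ : n.+1 = d - 1)%N; last by lia.
have -> : \sum_(1 <= j < d - 1) d2 (slack v) j = \sum_(1 <= j < d - 1) (xgap v j + ygap v j - 2).
  by apply: eq_big_nat => j j_in; apply: slack_d2; lia.
rewrite v_end slack0.
rewrite sumrB big_split /= sumr_const_nat (_ : d - 1 - 1 = n)%N; last by lia.
have -> : (2 * n)%:R = 2 *+ n :> R by rewrite natrM mulr_natr.
lra.
Qed.

Lemma in_Pd_bounded v (i : 'I_N) : Pd v -> `|v 0 i| <= (3 * n)%:R.
Proof.
move=> /in_PdP v_feas; have [v_slacks _] := v_feas.
have xgap_ge0 j : (0 < j < d - 1)%N -> 0 <= xgap v j by move=> ?; apply: (v_slacks j 1%N); lia.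
have ygap_ge0 j : (0 < j < d - 1)%N -> 0 <= ygap v j by move=> ?; apply: (v_slacks j 2%N); lia.
have sums := sum_gaps v_feas.
set Sx := \sum_(1 <= j < d - 1) xgap v j in sums.
set Sy := \sum_(1 <= j < d - 1) ygap v j in sums.
have Sx_ge0 : 0 <= Sx by apply: sumr_nat_ge0.
have Sy_ge0 : 0 <= Sy by apply: sumr_nat_ge0.
have s1 : 0 <= slack v 1 by apply: slack_ge0 => //; lia.
have sn : 0 <= slack v n by apply: slack_ge0 => //; lia.
have xr_bnd k : (k <= n)%N -> 0 <= xr v k <= Sx.
  move=> kn; rewrite xr_sum_xgap; apply/andP; split.
    by apply: sumr_nat_ge0 => j ?; apply: xgap_ge0; lia.
  by apply: sumr_nat_subrange_le; [lia | lia | lia | move=> j ?; apply: xgap_ge0; lia].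
have yc_bnd k : (0 < k <= n)%N -> 0 <= yc v k <= Sy.
  move=> kn; rewrite yc_sum_ygap; apply/andP; split.
    by apply: sumr_nat_ge0 => j ?; apply: ygap_ge0; lia.
  by apply: sumr_nat_subrange_le; [lia | lia | lia | move=> j ?; apply: ygap_ge0; lia].
have n1 : (0 < 1 <= n)%N by lia.
rewrite natrM in sums *; rewrite ler_norml; case: (coord_cases i) => [[k kn ->]|[k kn ->]|->].
- have /andP : 0 <= xr v (d - 1 - k) <= Sx by apply: xr_bnd; lia.
  by rewrite xc_xr //; lra.
- by have /andP := yc_bnd k kn; lra.
- by rewrite zc_slack1; have /andP := yc_bnd 1%N n1; lra.
Qed.

Lemma Pd_vertices : exists V : seq 'rV[R]_N,
  [/\ uniq V, size V = (3 ^ n)%N & forall v, v \in V <-> is_vertex_Pd v].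
Proof.
pose c_of (s : n.-tuple 'I_3) j := nth ord0 s j.-1.
exists [seq vtx (c_of s) | s <- enum {: n.-tuple 'I_3}]; split.
- rewrite map_inj_uniq ?enum_uniq // => s s' ss'; apply: eq_from_tnth => i.
  by have := vtx_inj ss' (j := i.+1) (ltn_ord i); rewrite /c_of /= -!tnth_nth.
- by rewrite size_map -cardE card_tuple card_ord.
move=> v; rewrite is_vertex_PdP; split=> [/mapP[s _ ->]|v_ext]; first exact: vtx_extreme.
apply/mapP; exists [tuple pat v i.+1 | i < n]; first by rewrite mem_enum.
rewrite {1}(extreme_vtx v_ext); apply: fits_unique; first exact: vtx_feasible.
move: (vtx_fits (c := pat v)); apply: fits_ext => j jn; have jn' : (j.-1 < n)%N by lia.
by rewrite /c_of (nth_mktuple _ _ (Ordinal jn')) /= prednK //; lia.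
Qed.

End PdCoordinates.

Theorem theorem5p20 (R : realFieldType) (d : nat) (hd : (3 <= d)%N) :
  (* P_d is bounded (a polytope) *)
  (exists M : R, forall v : 'rV[R]_(Pdim d), in_Pd v ->
       forall j, `|v 0 j| <= M)
  (* all vertices are integral *)
  /\ (forall v : 'rV[R]_(Pdim d), is_vertex_Pd v ->
        forall j, exists z : int, v 0 j = z%:~R)
  (* exactly 3^(d-2) vertices *)
  /\ (exists V : seq 'rV[R]_(Pdim d),
        [/\ uniq V, size V = (3 ^ (d - 2))%N &
            forall v, v \in V <-> is_vertex_Pd v]).
Proof.
split; [|split].
- by exists (3 * (d - 2))%:R => v v_in j; apply: in_Pd_bounded.
- move=> v /is_vertex_PdP v_ext j.
  by rewrite (extreme_vtx hd v_ext); apply: vtx_integer.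
- exact: Pd_vertices.
Qed.
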